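(* Adaptive scale modularity is monotonic for all $M\ge 0$ and $\gamma\ge 2$: for every graph $G=(V,E)$, every clustering $C$ of $G$, and every $C$-consistent improvement $G'=(V,E')$ of $G$ (such that $Q_{M,\gamma}(G,C)$ and $Q_{M,\gamma}(G',C)$ are defined), $Q_{M,\gamma}(G',C)\ge Q_{M,\gamma}(G,C)$.
   Context: A (symmetric weighted) graph is a pair $G=(V,E)$ of a finite set $V$ and $E:V\times V\to\mathbb{R}_{\ge 0}$ symmetric; self loops allowed. A clustering is a partition of $V$ into nonempty disjoint clusters; write $i\sim_C j$ if $i,j$ lie in the same cluster of $C$. For $c\subseteq V$, $v_c=\sum_{i\in c}\sum_{j\in V}E(i,j)$ and $w_c=\sum_{i,j\in c}E(i,j)$. Adaptive scale modularity: $Q_{M,\gamma}(G,C)=\sum_{c\in C}\left(\frac{w_c}{M+\gamma v_c}-\left(\frac{v_c}{M+\gamma v_c}\right)^2\right)$, defined when all denominators are positive. A graph $G'=(V,E')$ is a $C$-consistent improvement of $G=(V,E)$ if $E'(i,j)\ge E(i,j)$ whenever $i\sim_C j$ and $E'(i,j)\le E(i,j)$ whenever $i\not\sim_C j$. *)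

From mathcomp Require Import all_boot all_order all_algebra.
From mathcomp Require Import reals.
Set Implicit Arguments. Unset Strict Implicit. Unset Printing Implicit Defensive.
Import Order.TTheory GRing.Theory Num.Theory.
Local Open Scope ring_scope.

Definition is_graph (R : realType) (V : finType) (E : V -> V -> R) : Prop :=
  (forall i j, 0 <= E i j) /\ (forall i j, E i j = E j i).

(* A clustering of V: a partition of [set: V] into nonempty disjoint clusters
   (finset's [partition] includes [set0 \notin C]). *)
Definition is_clustering (V : finType) (C : {set {set V}}) : Prop :=
  partition C [set: V].

Definition same_cluster (V : finType) (C : {set {set V}}) (i j : V) : Prop :=
  exists2 c, c \in C & (i \in c) && (j \in c).

Definition vol (R : realType) (V : finType) (E : V -> V -> R) (c : {set V}) : R :=
  \sum_(i in c) \sum_(j : V) E i j.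

Definition wgt (R : realType) (V : finType) (E : V -> V -> R) (c : {set V}) : R :=
  \sum_(i in c) \sum_(j in c) E i j.

Definition asmod (R : realType) (M gamma : R) (V : finType) (E : V -> V -> R)
    (C : {set {set V}}) : R :=
  \sum_(c in C) (wgt E c / (M + gamma * vol E c)
                 - (vol E c / (M + gamma * vol E c)) ^+ 2).

Definition asmod_defined (R : realType) (M gamma : R) (V : finType)
    (E : V -> V -> R) (C : {set {set V}}) : Prop :=
  forall c, c \in C -> 0 < M + gamma * vol E c.

Definition consistent_improvement (R : realType) (V : finType)
    (C : {set {set V}}) (E E' : V -> V -> R) : Prop :=
  forall i j, (same_cluster C i j -> E i j <= E' i j) /\
              (~ same_cluster C i j -> E' i j <= E i j).

From mathcomp Require Import all_boot all_order all_algebra.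
From mathcomp Require Import reals ring lra.
Import Order.TTheory GRing.Theory Num.Theory.
Local Open Scope ring_scope.

(* The modularity is a sum over clusters of a score depending only on the
   inner weight w and the volume v = w + b of the cluster, b being the weight
   of the edges leaving it.  An improvement can only raise w and lower b, so
   it suffices that the score increases with w when b is fixed, and decreases
   with v when w is fixed.  For the first, writing
   t = 1 / (M + gamma v), the score is (gamma - gamma K t - (1 - M t)^2) /
   gamma^2 with K = M + gamma b independent of w; this is nonincreasing in t
   as soon as gamma K >= 2 M, which gamma >= 2 guarantees, and t decreases
   when w grows. *)

Section ClusterScore.

Context {R : realFieldType}.

Definition cluster_score (M gamma w v : R) : R :=
  w / (M + gamma * v) - (v / (M + gamma * v)) ^+ 2.

Lemma cluster_scoreE (M gamma w b : R) :
  0 < gamma -> 0 < M + gamma * (w + b) ->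
  let t := (M + gamma * (w + b))^-1 in
  cluster_score M gamma w (w + b) =
    (gamma - gamma * (M + gamma * b) * t - (1 - M * t) ^+ 2) / gamma ^+ 2.
Proof.
move=> gamma_gt0 D_gt0 /=; rewrite /cluster_score; field.
by rewrite !gt_eqF.
Qed.

Lemma score_poly_antitone (M gamma K t1 t2 : R) :
  0 <= M -> 2 * M <= gamma * K -> 0 <= t2 -> t2 <= t1 ->
  gamma - gamma * K * t1 - (1 - M * t1) ^+ 2
    <= gamma - gamma * K * t2 - (1 - M * t2) ^+ 2.
Proof.
move=> M_ge0 MK t2_ge0 t21; rewrite -subr_ge0.
have -> : gamma - gamma * K * t2 - (1 - M * t2) ^+ 2
          - (gamma - gamma * K * t1 - (1 - M * t1) ^+ 2)
        = (t1 - t2) * (gamma * K - 2 * M + M ^+ 2 * (t1 + t2)) by ring.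
apply: mulr_ge0; first lra.
have : 0 <= M ^+ 2 * (t1 + t2) by apply: mulr_ge0; [exact: sqr_ge0 | lra].
lra.
Qed.

Lemma cluster_score_inner_monotone (M gamma w1 w2 b : R) :
  0 <= M -> 2 <= gamma -> 0 <= b -> w1 <= w2 -> 0 < M + gamma * (w1 + b) ->
  cluster_score M gamma w1 (w1 + b) <= cluster_score M gamma w2 (w2 + b).
Proof.
move=> M_ge0 gamma_ge2 b_ge0 w12 D1_gt0.
have gamma_gt0 : 0 < gamma by lra.
have D12 : M + gamma * (w1 + b) <= M + gamma * (w2 + b) by nra.
have D2_gt0 : 0 < M + gamma * (w2 + b) by lra.
rewrite !cluster_scoreE // ler_pM2r ?invr_gt0 ?exprn_gt0 //.
apply: score_poly_antitone => //; first nra.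
  by rewrite invr_ge0; lra.
by rewrite lef_pV2 ?posrE.
Qed.

Lemma cluster_score_volume_antitone (M gamma w v1 v2 : R) :
  0 <= M -> 0 < gamma -> 0 <= w -> 0 <= v2 -> v2 <= v1 ->
  0 < M + gamma * v2 ->
  cluster_score M gamma w v1 <= cluster_score M gamma w v2.
Proof.
move=> M_ge0 gamma_gt0 w_ge0 v2_ge0 v21 D2_gt0.
have D1_gt0 : 0 < M + gamma * v1 by nra.
rewrite /cluster_score; apply: lerB.
  by rewrite ler_pdivrMr // mulrAC ler_pdivlMr //; apply: ler_wpM2l => //; nra.
have frac_ge0 : 0 <= v2 / (M + gamma * v2) by apply: divr_ge0; lra.
have frac_le : v2 / (M + gamma * v2) <= v1 / (M + gamma * v1).
  by rewrite ler_pdivrMr // mulrAC ler_pdivlMr //; nra.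
by rewrite lerXn2r // nnegrE //; apply: le_trans frac_le.
Qed.

End ClusterScore.

Section ClusterWeights.

Context {R : realType} {V : finType}.
Implicit Types (E : V -> V -> R) (c : {set V}).

Definition cut E c : R := \sum_(i in c) \sum_(j in ~: c) E i j.

Lemma vol_split E c : vol E c = wgt E c + cut E c.
Proof.
rewrite /vol /wgt /cut -big_split /=; apply: eq_bigr => i _.
by rewrite (bigID (mem c)) /=; congr (_ + _); apply: eq_bigl => j; rewrite inE.
Qed.

Lemma wgt_ge0 E c : (forall i j, 0 <= E i j) -> 0 <= wgt E c.
Proof. by move=> E_ge0; do 2!apply: sumr_ge0 => ? _. Qed.

Lemma cut_ge0 E c : (forall i j, 0 <= E i j) -> 0 <= cut E c.
Proof. by move=> E_ge0; do 2!apply: sumr_ge0 => ? _. Qed.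

Lemma same_cluster_in {C : {set {set V}}} {c : {set V}} {i j : V} :
  is_clustering C -> c \in C -> i \in c -> same_cluster C i j -> j \in c.
Proof.
move=> /and3P [_ triv _] cC ic [c' c'C /andP [ic' jc']].
suff -> : c = c' by [].
apply/eqP; apply: contraT => neq_cc'.
by move/disjointFr: (trivIsetP triv c c' cC c'C neq_cc') => /(_ i ic); rewrite ic'.
Qed.

Context {C : {set {set V}}} {E E' : V -> V -> R}.
Hypothesis improvement : consistent_improvement C E E'.

Lemma wgt_improvement c : c \in C -> wgt E c <= wgt E' c.
Proof.
move=> cC; apply: ler_sum => i ic; apply: ler_sum => j jc.
by apply: (improvement i j).1; exists c; rewrite ?ic.
Qed.

Lemma cut_improvement c :
  is_clustering C -> c \in C -> cut E' c <= cut E c.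
Proof.
move=> clusC cC; apply: ler_sum => i ic; apply: ler_sum => j jc.
apply: (improvement i j).2 => ij.
by move: jc; rewrite inE (same_cluster_in clusC cC ic ij).
Qed.

End ClusterWeights.

Theorem theorem6 (R : realType) (M gamma : R) (V : finType)
    (E E' : V -> V -> R) (C : {set {set V}}) :
  0 <= M -> 2 <= gamma ->
  is_graph E -> is_graph E' -> is_clustering C ->
  consistent_improvement C E E' ->
  asmod_defined M gamma E C -> asmod_defined M gamma E' C ->
  asmod M gamma E C <= asmod M gamma E' C.
Proof.
move=> M_ge0 gamma_ge2 [E_ge0 _] [E'_ge0 _] clusC impr defE defE'.
apply: ler_sum => c cC.
change (cluster_score M gamma (wgt E c) (vol E c)
        <= cluster_score M gamma (wgt E' c) (vol E' c)).
move: (defE c cC) (defE' c cC); rewrite !vol_split => D_gt0 D'_gt0.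
have w'_ge0 := wgt_ge0 E' c E'_ge0.
apply: (@le_trans _ _ (cluster_score M gamma (wgt E' c) (wgt E' c + cut E c))).
  apply: cluster_score_inner_monotone => //.
    exact: cut_ge0 E c E_ge0.
  exact: wgt_improvement impr c cC.
apply: cluster_score_volume_antitone => //; first lra.
  exact: addr_ge0 w'_ge0 (cut_ge0 E' c E'_ge0).
by rewrite lerD2l; apply: cut_improvement impr c clusC cC.
Qed.
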